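(* Let $u$ be a real solution of the sinh-Gordon equation, fix $a\in\mathbb{C}^*$, let $\psi^{(a)}$ be a solution of (Ψ) and $\varphi^{(a)}$ a solution of (Φ), both at $\lambda=a$, and set $\xi_{ij}=\psi^{(a)}_i\varphi^{(a)}_j$ and $\dot u=\xi_{11}-\xi_{22}$. Let $\lambda\in\mathbb{C}^*\setminus\{a\}$ and let $\psi$ be any solution of (Ψ) at $\lambda$. Then $$\dot\psi:=\frac{1}{\lambda-a}\begin{pmatrix}(\lambda+a)\xi_{11}&2\lambda\,\xi_{12}\\ 2a\,\xi_{21}&(\lambda+a)\xi_{22}\end{pmatrix}\psi$$ solves the linearization of (Ψ) in the direction $\dot u$, namely $$\partial\dot\psi=\tfrac12\begin{pmatrix}\partial u& ie^{-u}\\ i\lambda^{-1}e^{u}&-\partial u\end{pmatrix}\dot\psi+\tfrac12\begin{pmatrix}\partial\dot u&-i\dot u e^{-u}\\ i\dot u\lambda^{-1}e^{u}&-\partial\dot u\end{pmatrix}\psi,$$ $$\bar\partial\dot\psi=\tfrac12\begin{pmatrix}-\bar\partial u& i\lambda e^{u}\\ ie^{-u}&\bar\partial u\end{pmatrix}\dot\psi+\tfrac12\begin{pmatrix}-\bar\partial\dot u& i\dot u\lambda e^{u}\\ -i\dot u e^{-u}&\bar\partial\dot u\end{pmatrix}\psi.$$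
   Context: Coordinates $z$ on $\mathbb{R}^2\cong\mathbb{C}$, $\partial=\partial_z$, $\bar\partial=\partial_{\bar z}$. Sinh-Gordon equation: $\partial\bar\partial u+\tfrac12\sinh(2u)=0$, $u$ real smooth. For $\lambda\in\mathbb{C}^*$, system (Ψ) is $\partial\psi=\tfrac12\begin{pmatrix}\partial u& ie^{-u}\\ i\lambda^{-1}e^{u}&-\partial u\end{pmatrix}\psi$, $\bar\partial\psi=\tfrac12\begin{pmatrix}-\bar\partial u& i\lambda e^{u}\\ ie^{-u}&\bar\partial u\end{pmatrix}\psi$, and system (Φ) is $\partial\varphi=-\tfrac12\begin{pmatrix}\partial u& i\lambda^{-1}e^{u}\\ ie^{-u}&-\partial u\end{pmatrix}\varphi$, $\bar\partial\varphi=-\tfrac12\begin{pmatrix}-\bar\partial u& ie^{-u}\\ i\lambda e^{u}&\bar\partial u\end{pmatrix}\varphi$. *)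

From Stdlib Require Import Reals List.
Open Scope R_scope.

Definition Cplx : Type := (R * R)%type.
Definition RtoC (r : R) : Cplx := (r, 0).
Definition Ci : Cplx := (0, 1).
Definition Cadd (z w : Cplx) : Cplx := (fst z + fst w, snd z + snd w).
Definition Copp (z : Cplx) : Cplx := (- fst z, - snd z).
Definition Csub (z w : Cplx) : Cplx := Cadd z (Copp w).
Definition Cmul (z w : Cplx) : Cplx :=
  (fst z * fst w - snd z * snd w, fst z * snd w + snd z * fst w).
Definition Cinv (z : Cplx) : Cplx :=
  (fst z / (fst z ^ 2 + snd z ^ 2), - snd z / (fst z ^ 2 + snd z ^ 2)).
Definition Cdiv (z w : Cplx) : Cplx := Cmul z (Cinv w).

Declare Scope C_scope.
Delimit Scope C_scope with C.
Infix "+" := Cadd : C_scope.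
Infix "-" := Csub : C_scope.
Infix "*" := Cmul : C_scope.
Infix "/" := Cdiv : C_scope.
Notation "- z" := (Copp z) : C_scope.

Definition half : Cplx := RtoC (1/2).

(* Partial derivatives of a complex-valued function of (x,y) in R^2 = C, z = x + i y. *)
Definition is_dx (f : R -> R -> Cplx) (x y : R) (l : Cplx) : Prop :=
  derivable_pt_lim (fun t => fst (f t y)) x (fst l) /\
  derivable_pt_lim (fun t => snd (f t y)) x (snd l).
Definition is_dy (f : R -> R -> Cplx) (x y : R) (l : Cplx) : Prop :=
  derivable_pt_lim (fun t => fst (f x t)) y (fst l) /\
  derivable_pt_lim (fun t => snd (f x t)) y (snd l).

Definition is_dz (f : R -> R -> Cplx) (x y : R) (l : Cplx) : Prop :=
  exists fx fy, is_dx f x y fx /\ is_dy f x y fy /\ l = (half * (fx - Ci * fy))%C.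
Definition is_dzb (f : R -> R -> Cplx) (x y : R) (l : Cplx) : Prop :=
  exists fx fy, is_dx f x y fx /\ is_dy f x y fy /\ l = (half * (fx + Ci * fy))%C.

Definition cont2 (g : R -> R -> R) : Prop :=
  forall x y eps, 0 < eps -> exists delta, 0 < delta /\
    forall x' y', Rabs (x' - x) < delta -> Rabs (y' - y) < delta ->
      Rabs (g x' y' - g x y) < eps.

(* Smooth (C^infinity) real function on R^2: a family D indexed by words over
   {x (false), y (true)} of iterated partial derivatives, all continuous. *)
Definition smooth2 (u : R -> R -> R) : Prop :=
  exists D : list bool -> R -> R -> R,
    D nil = u /\
    (forall w, cont2 (D w)) /\
    (forall w x y, derivable_pt_lim (fun t => D w t y) x (D (false :: w) x y)) /\
    (forall w x y, derivable_pt_lim (fun t => D w x t) y (D (true :: w) x y)).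

Definition Cfun (u : R -> R -> R) : R -> R -> Cplx := fun x y => RtoC (u x y).

(* Sinh-Gordon: d dbar u + (1/2) sinh(2u) = 0. *)
Definition sinh_gordon (u : R -> R -> R) : Prop :=
  exists g : R -> R -> Cplx,
    (forall x y, is_dzb (Cfun u) x y (g x y)) /\
    (forall x y, is_dz g x y (RtoC (- (1/2) * sinh (2 * u x y)))).

Definition eu (u : R -> R -> R) x y : Cplx := RtoC (exp (u x y)).
Definition emu (u : R -> R -> R) x y : Cplx := RtoC (exp (- u x y)).

Definition PsiSys (u : R -> R -> R) (lam : Cplx) (p1 p2 : R -> R -> Cplx) : Prop :=
  forall x y, exists du dbu,
    is_dz (Cfun u) x y du /\ is_dzb (Cfun u) x y dbu /\
    is_dz p1 x y (half * (du * p1 x y + Ci * emu u x y * p2 x y))%C /\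
    is_dz p2 x y (half * (Ci * Cinv lam * eu u x y * p1 x y - du * p2 x y))%C /\
    is_dzb p1 x y (half * (- dbu * p1 x y + Ci * lam * eu u x y * p2 x y))%C /\
    is_dzb p2 x y (half * (Ci * emu u x y * p1 x y + dbu * p2 x y))%C.

Definition PhiSys (u : R -> R -> R) (lam : Cplx) (q1 q2 : R -> R -> Cplx) : Prop :=
  forall x y, exists du dbu,
    is_dz (Cfun u) x y du /\ is_dzb (Cfun u) x y dbu /\
    is_dz q1 x y (- (half * (du * q1 x y + Ci * Cinv lam * eu u x y * q2 x y)))%C /\
    is_dz q2 x y (- (half * (Ci * emu u x y * q1 x y - du * q2 x y)))%C /\
    is_dzb q1 x y (- (half * (- dbu * q1 x y + Ci * emu u x y * q2 x y)))%C /\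
    is_dzb q2 x y (- (half * (Ci * lam * eu u x y * q1 x y + dbu * q2 x y)))%C.

(* Let U(lam), V(lam) be the matrices of the d- and dbar-equations of (Psi);
   those of (Phi) are -U(lam)^T and -V(lam)^T.  Hence the squared
   eigenfunctions xi_ij = psi^(a)_i phi^(a)_j, i.e. X = psi^(a) (phi^(a))^T,
   satisfy the commutator equations  d X = [U(a), X],  dbar X = [V(a), X];
   in particular u drops out of the derivatives of xi_11 and xi_22.  The
   candidate dpsi is  M psi  with M a fixed rational expression in lam, a and X,
   so by the Leibniz rule the linearised equations for dpsi amount to the
   pointwise identities  d M = [U(lam), M] + U'  and  dbar M = [V(lam), M] + V'
   (U', V' the variations in the direction ud), which hold once the
   derivatives of X are substituted. *)
From Stdlib Require Import Reals Lra Field.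
Open Scope R_scope.

Lemma Cplx_ring : ring_theory (RtoC 0) (RtoC 1) Cadd Cmul Csub Copp (@eq Cplx).
Proof.
  constructor; intros;
    repeat match goal with z : Cplx |- _ => destruct z end;
    unfold Csub, Cmul, Cadd, Copp, RtoC; simpl; f_equal; ring.
Qed.

Lemma sum_squares_neq_0 (z : Cplx) : z <> RtoC 0 -> fst z ^ 2 + snd z ^ 2 <> 0.
Proof.
  destruct z as [p q]; unfold RtoC; simpl; intros Hz E; apply Hz.
  assert (p = 0) by nra; assert (q = 0) by nra; subst; reflexivity.
Qed.

Lemma Cplx_field :
  field_theory (RtoC 0) (RtoC 1) Cadd Cmul Csub Copp Cdiv Cinv (@eq Cplx).
Proof.
  constructor.
  - exact Cplx_ring.
  - unfold RtoC; intro E; injection E; lra.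
  - reflexivity.
  - intros [p q] Hz; pose proof (sum_squares_neq_0 _ Hz) as N; simpl in N.
    unfold Cinv, Cmul, RtoC; simpl; f_equal; field; lra.
Qed.

Add Field Cplx_field_inst : Cplx_field.

(* The relation i^2 = -1, fed to 'field' as a rewriting rule. *)
Lemma Ci_sq : (Ci * Ci = - RtoC 1)%C.
Proof. unfold Ci, Cmul, Copp, RtoC; simpl; f_equal; ring. Qed.

(* The real constants 1/2 and 2, which 'field' sees as atoms, as field expressions. *)
Lemma half_inv_two : half = Cinv (RtoC 1 + RtoC 1)%C.
Proof. unfold half, RtoC, Cinv, Cadd; simpl; f_equal; field. Qed.

Lemma two_one_plus_one : RtoC 2 = (RtoC 1 + RtoC 1)%C.
Proof. unfold RtoC, Cadd; simpl; f_equal; ring. Qed.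

Lemma two_neq_0 : (RtoC 1 + RtoC 1)%C <> RtoC 0.
Proof. unfold RtoC, Cadd; simpl; intro E; injection E; lra. Qed.

Lemma Csub_neq_0 (z w : Cplx) : z <> w -> (z - w)%C <> RtoC 0.
Proof.
  destruct z, w; unfold Csub, Cadd, Copp, RtoC; simpl; intros Hzw E; apply Hzw.
  injection E; intros; f_equal; lra.
Qed.

Ltac cplx_identity :=
  cbv beta; rewrite ?half_inv_two, ?two_one_plus_one; field [Ci_sq]; repeat split; auto using two_neq_0.

Definition has_cderiv (g : R -> Cplx) (t : R) (l : Cplx) : Prop :=
  derivable_pt_lim (fun s => fst (g s)) t (fst l) /\
  derivable_pt_lim (fun s => snd (g s)) t (snd l).

Lemma derivable_pt_lim_value f t l l' :
  derivable_pt_lim f t l -> l = l' -> derivable_pt_lim f t l'.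
Proof. intros H <-; exact H. Qed.

(* The Stdlib rules, restated for lambda-abstractions instead of the
   function operations (f * g)%F, (f + g)%F, (f - g)%F. *)
Lemma derivable_pt_lim_mul f g t lf lg :
  derivable_pt_lim f t lf -> derivable_pt_lim g t lg ->
  derivable_pt_lim (fun s => f s * g s) t (lf * g t + f t * lg).
Proof. exact (derivable_pt_lim_mult f g t lf lg). Qed.

Lemma derivable_pt_lim_add f g t lf lg :
  derivable_pt_lim f t lf -> derivable_pt_lim g t lg ->
  derivable_pt_lim (fun s => f s + g s) t (lf + lg).
Proof. exact (derivable_pt_lim_plus f g t lf lg). Qed.

Lemma derivable_pt_lim_sub f g t lf lg :
  derivable_pt_lim f t lf -> derivable_pt_lim g t lg ->
  derivable_pt_lim (fun s => f s - g s) t (lf - lg).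
Proof. exact (derivable_pt_lim_minus f g t lf lg). Qed.

Lemma cderiv_mul g h t lg lh :
  has_cderiv g t lg -> has_cderiv h t lh ->
  has_cderiv (fun s => (g s * h s)%C) t (lg * h t + g t * lh)%C.
Proof.
  intros [Hg1 Hg2] [Hh1 Hh2]; unfold Cmul, Cadd; split; simpl;
    (eapply derivable_pt_lim_value;
     [ first [apply derivable_pt_lim_sub | apply derivable_pt_lim_add];
       apply derivable_pt_lim_mul; eassumption | cbv beta; ring ]).
Qed.

Lemma cderiv_add g h t lg lh :
  has_cderiv g t lg -> has_cderiv h t lh ->
  has_cderiv (fun s => (g s + h s)%C) t (lg + lh)%C.
Proof. intros [Hg1 Hg2] [Hh1 Hh2]; split; apply derivable_pt_lim_add; assumption. Qed.

Lemma cderiv_opp g t lg :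
  has_cderiv g t lg -> has_cderiv (fun s => (- g s)%C) t (- lg)%C.
Proof. intros [Hg1 Hg2]; split; apply derivable_pt_lim_opp; assumption. Qed.

Lemma cderiv_sub g h t lg lh :
  has_cderiv g t lg -> has_cderiv h t lh ->
  has_cderiv (fun s => (g s - h s)%C) t (lg - lh)%C.
Proof. intros Hg Hh; exact (cderiv_add _ _ _ _ _ Hg (cderiv_opp _ _ _ Hh)). Qed.

Lemma cderiv_const (k : Cplx) t : has_cderiv (fun _ => k) t (RtoC 0).
Proof. split; apply derivable_pt_lim_const. Qed.

Lemma cderiv_unique g t l l' : has_cderiv g t l -> has_cderiv g t l' -> l = l'.
Proof.
  destruct l, l'; intros [H1 H2] [H1' H2']; simpl in *.
  now rewrite (uniqueness_limite _ _ _ _ H1 H1'), (uniqueness_limite _ _ _ _ H2 H2').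
Qed.

(* l = al * d_x f + be * d_y f at (x, y).  Both Wirtinger derivatives are of
   this form, so their calculus rules are proved once, for arbitrary al, be. *)
Definition has_partial_comb (al be : Cplx) (f : R -> R -> Cplx) (x y : R) (l : Cplx) :=
  exists fx fy, is_dx f x y fx /\ is_dy f x y fy /\ l = (al * fx + be * fy)%C.

Lemma is_dz_comb f x y l :
  is_dz f x y l <-> has_partial_comb half (- (half * Ci))%C f x y l.
Proof.
  split; intros (fx & fy & Hx & Hy & ->); exists fx, fy; split; auto; split; auto; ring.
Qed.

Lemma is_dzb_comb f x y l :
  is_dzb f x y l <-> has_partial_comb half (half * Ci)%C f x y l.
Proof.
  split; intros (fx & fy & Hx & Hy & ->); exists fx, fy; split; auto; split; auto; ring.
Qed.

Section PartialCombination.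
Variables (al be : Cplx) (x y : R).

Lemma comb_mul f g lf lg :
  has_partial_comb al be f x y lf -> has_partial_comb al be g x y lg ->
  has_partial_comb al be (fun s t => (f s t * g s t)%C) x y (lf * g x y + f x y * lg)%C.
Proof.
  intros (fx & fy & Hfx & Hfy & ->) (gx & gy & Hgx & Hgy & ->).
  exists (fx * g x y + f x y * gx)%C, (fy * g x y + f x y * gy)%C; split; [|split].
  - exact (cderiv_mul (fun t => f t y) (fun t => g t y) x _ _ Hfx Hgx).
  - exact (cderiv_mul (fun t => f x t) (fun t => g x t) y _ _ Hfy Hgy).
  - ring.
Qed.

Lemma comb_add f g lf lg :
  has_partial_comb al be f x y lf -> has_partial_comb al be g x y lg ->
  has_partial_comb al be (fun s t => (f s t + g s t)%C) x y (lf + lg)%C.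
Proof.
  intros (fx & fy & Hfx & Hfy & ->) (gx & gy & Hgx & Hgy & ->).
  exists (fx + gx)%C, (fy + gy)%C; split; [|split].
  - exact (cderiv_add (fun t => f t y) (fun t => g t y) x _ _ Hfx Hgx).
  - exact (cderiv_add (fun t => f x t) (fun t => g x t) y _ _ Hfy Hgy).
  - ring.
Qed.

Lemma comb_sub f g lf lg :
  has_partial_comb al be f x y lf -> has_partial_comb al be g x y lg ->
  has_partial_comb al be (fun s t => (f s t - g s t)%C) x y (lf - lg)%C.
Proof.
  intros (fx & fy & Hfx & Hfy & ->) (gx & gy & Hgx & Hgy & ->).
  exists (fx - gx)%C, (fy - gy)%C; split; [|split].
  - exact (cderiv_sub (fun t => f t y) (fun t => g t y) x _ _ Hfx Hgx).
  - exact (cderiv_sub (fun t => f x t) (fun t => g x t) y _ _ Hfy Hgy).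
  - ring.
Qed.

Lemma comb_const (k : Cplx) : has_partial_comb al be (fun _ _ => k) x y (RtoC 0).
Proof. exists (RtoC 0), (RtoC 0); split; [|split]; try apply cderiv_const; ring. Qed.

Lemma comb_unique f l l' :
  has_partial_comb al be f x y l -> has_partial_comb al be f x y l' -> l = l'.
Proof.
  intros (fx & fy & Hfx & Hfy & ->) (fx' & fy' & Hfx' & Hfy' & ->).
  now rewrite (cderiv_unique _ _ _ _ Hfx Hfx'), (cderiv_unique _ _ _ _ Hfy Hfy').
Qed.

End PartialCombination.

Lemma dz_mul f g x y lf lg : is_dz f x y lf -> is_dz g x y lg ->
  is_dz (fun s t => (f s t * g s t)%C) x y (lf * g x y + f x y * lg)%C.
Proof. rewrite !is_dz_comb; apply comb_mul. Qed.

Lemma dz_add f g x y lf lg : is_dz f x y lf -> is_dz g x y lg ->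
  is_dz (fun s t => (f s t + g s t)%C) x y (lf + lg)%C.
Proof. rewrite !is_dz_comb; apply comb_add. Qed.

Lemma dz_sub f g x y lf lg : is_dz f x y lf -> is_dz g x y lg ->
  is_dz (fun s t => (f s t - g s t)%C) x y (lf - lg)%C.
Proof. rewrite !is_dz_comb; apply comb_sub. Qed.

Lemma dz_const (k : Cplx) x y : is_dz (fun _ _ => k) x y (RtoC 0).
Proof. rewrite is_dz_comb; apply comb_const. Qed.

Lemma dz_unique f x y l l' : is_dz f x y l -> is_dz f x y l' -> l = l'.
Proof. rewrite !is_dz_comb; apply comb_unique. Qed.

Lemma dz_value f x y l l' : is_dz f x y l -> l = l' -> is_dz f x y l'.
Proof. intros H <-; exact H. Qed.

Lemma dzb_mul f g x y lf lg : is_dzb f x y lf -> is_dzb g x y lg ->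
  is_dzb (fun s t => (f s t * g s t)%C) x y (lf * g x y + f x y * lg)%C.
Proof. rewrite !is_dzb_comb; apply comb_mul. Qed.

Lemma dzb_add f g x y lf lg : is_dzb f x y lf -> is_dzb g x y lg ->
  is_dzb (fun s t => (f s t + g s t)%C) x y (lf + lg)%C.
Proof. rewrite !is_dzb_comb; apply comb_add. Qed.

Lemma dzb_sub f g x y lf lg : is_dzb f x y lf -> is_dzb g x y lg ->
  is_dzb (fun s t => (f s t - g s t)%C) x y (lf - lg)%C.
Proof. rewrite !is_dzb_comb; apply comb_sub. Qed.

Lemma dzb_const (k : Cplx) x y : is_dzb (fun _ _ => k) x y (RtoC 0).
Proof. rewrite is_dzb_comb; apply comb_const. Qed.

Lemma dzb_unique f x y l l' : is_dzb f x y l -> is_dzb f x y l' -> l = l'.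
Proof. rewrite !is_dzb_comb; apply comb_unique. Qed.

Lemma dzb_value f x y l l' : is_dzb f x y l -> l = l' -> is_dzb f x y l'.
Proof. intros H <-; exact H. Qed.

Ltac wirtinger_leibniz :=
  repeat first [ eassumption | apply dz_const | apply dzb_const
               | eapply dz_mul | eapply dz_add | eapply dz_sub
               | eapply dzb_mul | eapply dzb_add | eapply dzb_sub ].

Section SquaredEigenfunctions.
Variables (u : R -> R -> R) (a : Cplx) (p1 p2 q1 q2 : R -> R -> Cplx).
Hypotheses (Hpsi : PsiSys u a p1 p2) (Hphi : PhiSys u a q1 q2).

Local Notation xi11 := (fun s t => (p1 s t * q1 s t)%C).
Local Notation xi12 := (fun s t => (p1 s t * q2 s t)%C).
Local Notation xi21 := (fun s t => (p2 s t * q1 s t)%C).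
Local Notation xi22 := (fun s t => (p2 s t * q2 s t)%C).

Lemma squared_eigenfunction_dz x y du :
  a <> RtoC 0 -> is_dz (Cfun u) x y du ->
  is_dz xi11 x y
    (half * Ci * (emu u x y * xi21 x y - Cinv a * eu u x y * xi12 x y))%C /\
  is_dz xi12 x y
    (du * xi12 x y + half * Ci * emu u x y * (xi22 x y - xi11 x y))%C /\
  is_dz xi21 x y
    (- du * xi21 x y + half * Ci * Cinv a * eu u x y * (xi11 x y - xi22 x y))%C /\
  is_dz xi22 x y
    (- (half * Ci * (emu u x y * xi21 x y - Cinv a * eu u x y * xi12 x y)))%C.
Proof.
  intros Ha Hdu.
  destruct (Hpsi x y) as (du1 & _ & Hdu1 & _ & Hp1 & Hp2 & _).
  destruct (Hphi x y) as (du2 & _ & Hdu2 & _ & Hq1 & Hq2 & _).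
  rewrite (dz_unique _ _ _ _ _ Hdu1 Hdu) in *; rewrite (dz_unique _ _ _ _ _ Hdu2 Hdu) in *.
  split; [|split; [|split]]; (eapply dz_value; [wirtinger_leibniz | cplx_identity]).
Qed.

Lemma squared_eigenfunction_dzb x y dbu :
  is_dzb (Cfun u) x y dbu ->
  is_dzb xi11 x y
    (half * Ci * (a * eu u x y * xi21 x y - emu u x y * xi12 x y))%C /\
  is_dzb xi12 x y
    (- dbu * xi12 x y + half * Ci * a * eu u x y * (xi22 x y - xi11 x y))%C /\
  is_dzb xi21 x y
    (dbu * xi21 x y + half * Ci * emu u x y * (xi11 x y - xi22 x y))%C /\
  is_dzb xi22 x y
    (- (half * Ci * (a * eu u x y * xi21 x y - emu u x y * xi12 x y)))%C.
Proof.
  intros Hdbu.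
  destruct (Hpsi x y) as (_ & dbu1 & _ & Hdbu1 & _ & _ & Hp1 & Hp2).
  destruct (Hphi x y) as (_ & dbu2 & _ & Hdbu2 & _ & _ & Hq1 & Hq2).
  rewrite (dzb_unique _ _ _ _ _ Hdbu1 Hdbu) in *; rewrite (dzb_unique _ _ _ _ _ Hdbu2 Hdbu) in *.
  split; [|split; [|split]]; (eapply dzb_value; [wirtinger_leibniz | cplx_identity]).
Qed.

End SquaredEigenfunctions.

Theorem proposition3
  (u : R -> R -> R) (a lam : Cplx) (p1 p2 q1 q2 psi1 psi2 : R -> R -> Cplx)
  (Hsmooth : smooth2 u) (Hsg : sinh_gordon u)
  (Ha : a <> RtoC 0) (Hlam : lam <> RtoC 0) (Hlama : lam <> a)
  (Hpsia : PsiSys u a p1 p2) (Hphia : PhiSys u a q1 q2)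
  (Hpsi : PsiSys u lam psi1 psi2) :
  let xi11 := fun x y => (p1 x y * q1 x y)%C in
  let xi12 := fun x y => (p1 x y * q2 x y)%C in
  let xi21 := fun x y => (p2 x y * q1 x y)%C in
  let xi22 := fun x y => (p2 x y * q2 x y)%C in
  let ud := fun x y => (xi11 x y - xi22 x y)%C in
  let c := Cinv (lam - a)%C in
  let dpsi1 := fun x y =>
    (c * ((lam + a) * xi11 x y * psi1 x y + RtoC 2 * lam * xi12 x y * psi2 x y))%C in
  let dpsi2 := fun x y =>
    (c * (RtoC 2 * a * xi21 x y * psi1 x y + (lam + a) * xi22 x y * psi2 x y))%C in
  forall x y, exists du dbu dud dbud,
    is_dz (Cfun u) x y du /\ is_dzb (Cfun u) x y dbu /\
    is_dz ud x y dud /\ is_dzb ud x y dbud /\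
    is_dz dpsi1 x y
      (half * (du * dpsi1 x y + Ci * emu u x y * dpsi2 x y)
       + half * (dud * psi1 x y - Ci * ud x y * emu u x y * psi2 x y))%C /\
    is_dz dpsi2 x y
      (half * (Ci * Cinv lam * eu u x y * dpsi1 x y - du * dpsi2 x y)
       + half * (Ci * ud x y * Cinv lam * eu u x y * psi1 x y - dud * psi2 x y))%C /\
    is_dzb dpsi1 x y
      (half * (- dbu * dpsi1 x y + Ci * lam * eu u x y * dpsi2 x y)
       + half * (- dbud * psi1 x y + Ci * ud x y * lam * eu u x y * psi2 x y))%C /\
    is_dzb dpsi2 x y
      (half * (Ci * emu u x y * dpsi1 x y + dbu * dpsi2 x y)
       + half * (- (Ci * ud x y * emu u x y) * psi1 x y + dbud * psi2 x y))%C.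
Proof.
  cbv zeta; intros x y.
  destruct (Hpsi x y) as (du & dbu & Hdu & Hdbu & Hs1 & Hs2 & Hs1b & Hs2b).
  destruct (squared_eigenfunction_dz _ _ _ _ _ _ Hpsia Hphia x y du Ha Hdu)
    as (X11 & X12 & X21 & X22).
  destruct (squared_eigenfunction_dzb _ _ _ _ _ _ Hpsia Hphia x y dbu Hdbu)
    as (Y11 & Y12 & Y21 & Y22).
  pose proof (Csub_neq_0 _ _ Hlama) as Hla.
  do 4 eexists; split; [exact Hdu|]; split; [exact Hdbu|].
  split; [apply dz_sub; eassumption|]; split; [apply dzb_sub; eassumption|].
  split; [|split; [|split]];
    (first [eapply dz_value | eapply dzb_value]; [wirtinger_leibniz | cplx_identity]).
Qed.
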